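(* Let $W\in\mathbb{R}^{n\times m}$ with rows $w_1,\dots,w_n$, let $u\in\mathbb{R}^{1\times n}$, and let $a\le b$ be real numbers. Call a pair $(\Delta x,\Delta\sigma)\in\mathbb{R}^m\times\mathbb{R}^n$ admissible if $\Delta x\neq0$ and for every $i\in[n]$, $$\begin{pmatrix}w_i\Delta x\\ \Delta\sigma_i\end{pmatrix}^T\begin{pmatrix}-2ab& a+b\\ a+b&-2\end{pmatrix}\begin{pmatrix}w_i\Delta x\\ \Delta\sigma_i\end{pmatrix}\ge 0 .$$ Then $$\sup_{(\Delta x,\Delta\sigma)\ \text{admissible}}\frac{(u\Delta\sigma)^2}{\langle\Delta x,\Delta x\rangle}=\max_{y\in[a,b]^n}\big\|W^T\mathrm{diag}(y)u^T\big\|_2^2 .$$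
   Context: $\mathrm{diag}(y)$ is the diagonal matrix with diagonal $y$. The constraint on $(w_i\Delta x,\Delta\sigma_i)$ is equivalent to $(\Delta\sigma_i-a\,w_i\Delta x)(\Delta\sigma_i-b\,w_i\Delta x)\le0$, i.e. it encodes that the $i$-th activation has slope in $[a,b]$. *)

From HB Require Import structures.
From mathcomp Require Import all_boot all_order all_algebra.
From mathcomp Require Import all_classical all_reals.
Set Implicit Arguments. Unset Strict Implicit. Unset Printing Implicit Defensive.
Import Order.TTheory GRing.Theory Num.Theory.
Local Open Scope ring_scope.
Local Open Scope classical_set_scope.

Definition sectorQ (R : realType) (a b : R) : 'M[R]_2 :=
  \matrix_(i < 2, j < 2)
    (if (val i == 0%N) && (val j == 0%N) then - (2 * a * b)
     else if (val i == 1%N) && (val j == 1%N) then - 2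
     else a + b).

Definition pair2 (R : realType) (p q : R) : 'cV[R]_2 :=
  \col_(k < 2) (if val k == 0%N then p else q).

Definition admissible (R : realType) (n m : nat) (W : 'M[R]_(n, m)) (a b : R)
    (dx : 'cV[R]_m) (ds : 'cV[R]_n) : Prop :=
  dx != 0 /\
  forall i : 'I_n,
    let v := pair2 ((W *m dx) i 0) (ds i 0) in
    0 <= ((v^T *m sectorQ a b) *m v) 0 0.

Definition ratio_set (R : realType) (n m : nat) (W : 'M[R]_(n, m))
    (u : 'rV[R]_n) (a b : R) : set R :=
  [set r | exists dx ds, admissible W a b dx ds /\
           r = ((u *m ds) 0 0) ^+ 2 / (dx^T *m dx) 0 0].

Definition gain (R : realType) (n m : nat) (W : 'M[R]_(n, m))
    (u : 'rV[R]_n) (y : 'rV[R]_n) : R :=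
  let v := W^T *m diag_mx y *m u^T in (v^T *m v) 0 0.

Definition in_box (R : realType) (n : nat) (a b : R) (y : 'rV[R]_n) : Prop :=
  forall i : 'I_n, a <= y 0 i <= b.

From HB Require Import structures.
From mathcomp Require Import all_boot all_order all_algebra.
From mathcomp Require Import all_classical all_reals.
From mathcomp Require Import ring lra.
Import Order.TTheory GRing.Theory Num.Theory.
Set Implicit Arguments. Unset Strict Implicit. Unset Printing Implicit Defensive.
Local Open Scope ring_scope.

(* The sector condition on (w_i dx, dsigma_i) holds exactly when dsigma_i = y_i (w_i dx) for a
   slope y_i in [a, b], i.e. dsigma = diag(y) W dx with y in the box.  Then
   u dsigma = <v(y), dx> for v(y) = W^T diag(y) u^T, so by Cauchy-Schwarz every ratio is at most
   |v(y)|^2 = gain y, with equality at dx = v(y) (and ratio 0 = gain y for any dx <> 0 when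
   v(y) = 0).  Along each coordinate of y the gain is a convex quadratic, so moving the
   coordinates one at a time to a or b never decreases it: the maximum over the box is attained
   at one of its finitely many vertices. *)

Lemma sector_slopeP (R : realFieldType) (a b p q : R) : a <= b ->
  (q - a * p) * (q - b * p) <= 0 <-> exists2 t, a <= t <= b & q = t * p.
Proof.
have factor (t : R) : (t * p - a * p) * (t * p - b * p) = p ^+ 2 * ((t - a) * (t - b)) by ring.
have sqr_gt0_neq0 : p != 0 -> 0 < p ^+ 2 by move=> p0; rewrite exprn_even_gt0 // p0 orbT.
move=> hab; split => [hpq | [t /andP[hat htb] ->]]; last first.
  by rewrite factor mulr_ge0_le0 ?sqr_ge0 //; nra.
have [p0 | p0] := eqVneq p 0.
  exists a; first by rewrite lexx hab.
  by move: hpq; rewrite p0 !mulr0 !subr0; nra.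
exists (q / p); last by rewrite divfK.
move: hpq; rewrite -[in X in X <= 0](divfK p0 q) factor pmulr_rle0 ?sqr_gt0_neq0 //.
by move=> h; apply/andP; split; nra.
Qed.

Section SquaredNorm.
Variable R : realFieldType.
Variable m : nat.
Implicit Types (a b t : R) (v x d : 'cV[R]_m).

Definition sqnorm v : R := (v^T *m v) 0 0.

Lemma sqnormE v : sqnorm v = \sum_j v j 0 ^+ 2.
Proof. by rewrite /sqnorm mxE; apply: eq_bigr => j _; rewrite !mxE expr2. Qed.

Lemma sqnorm_ge0 v : 0 <= sqnorm v.
Proof. by rewrite sqnormE sumr_ge0 // => j _; rewrite sqr_ge0. Qed.

Lemma sqnorm_gt0 v : (0 < sqnorm v) = (v != 0).
Proof.
rewrite lt_def sqnorm_ge0 andbT; apply/negb_inj; rewrite !negbK.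
apply/eqP/eqP => [|->]; last by rewrite /sqnorm mulmx0 mxE.
rewrite sqnormE => /psumr_eq0P v0; apply/colP => j; rewrite mxE.
by apply/eqP; rewrite -sqrf_eq0 v0 // => i _; rewrite sqr_ge0.
Qed.

Lemma dotmxC v x : v^T *m x = x^T *m v.
Proof. by apply/matrixP => i j; rewrite !ord1 !mxE; apply: eq_bigr => k _; rewrite !mxE mulrC. Qed.

Lemma sqnormDZ x d t :
  sqnorm (x + t *: d) = sqnorm x + 2 * t * (x^T *m d) 0 0 + t ^+ 2 * sqnorm d.
Proof.
rewrite /sqnorm [(x + _)^T]linearD /= [(t *: d)^T]linearZ /= !mulmxDr !mulmxDl.
by rewrite -!scalemxAr -!scalemxAl (dotmxC d x) !mxE; ring.
Qed.

Lemma cauchy_schwarz v x : ((v^T *m x) 0 0) ^+ 2 <= sqnorm v * sqnorm x.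
Proof.
have [->|x0] := eqVneq x 0; first by rewrite /sqnorm !mulmx0 mxE expr0n mulr0.
set P := (v^T *m x) 0 0; have X0 : 0 < sqnorm x by rewrite sqnorm_gt0.
have := sqnorm_ge0 (v + (- P / sqnorm x) *: x); rewrite sqnormDZ -/P => h.
rewrite -subr_ge0.
have -> : sqnorm v * sqnorm x - P ^+ 2 =
  sqnorm x * (sqnorm v + 2 * (- P / sqnorm x) * P + (- P / sqnorm x) ^+ 2 * sqnorm x).
  by field; rewrite gt_eqF.
by rewrite mulr_ge0 // ltW.
Qed.

Lemma sqnorm_affine_le_max x d a b t : a <= t <= b ->
  sqnorm (x + t *: d) <= Num.max (sqnorm (x + a *: d)) (sqnorm (x + b *: d)).
Proof.
move=> /andP[hat htb]; rewrite !sqnormDZ.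
set f := fun s => sqnorm x + 2 * s * (x^T *m d) 0 0 + s ^+ 2 * sqnorm d.
rewrite -/(f t) -/(f a) -/(f b).
have convex : (b - a) * f t <= (b - t) * f a + (t - a) * f b.
  rewrite -subr_ge0; have -> : (b - t) * f a + (t - a) * f b - (b - a) * f t =
    sqnorm d * ((b - a) * (t - a) * (b - t)) by rewrite /f; ring.
  by rewrite mulr_ge0 ?sqnorm_ge0 // !mulr_ge0 // subr_ge0 // (le_trans hat).
have [ab | ba] := ltrP a b; last first.
  have -> : t = a by apply/le_anti; rewrite (le_trans htb ba) hat.
  by rewrite le_max lexx.
have ba0 : 0 < b - a by rewrite subr_gt0.
rewrite le_max; apply/orP.
by case: (lerP (f a) (f b)) => h; [right | left]; rewrite -(ler_pM2l ba0); nra.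
Qed.
End SquaredNorm.

Section SectorBoundedGain.
Variables (R : realType) (n m : nat) (W : 'M[R]_(n, m)) (u : 'rV[R]_n) (a b : R).
Hypothesis hab : a <= b.
Implicit Types (y : 'rV[R]_n) (dx : 'cV[R]_m) (ds : 'cV[R]_n) (t : R).

Definition gain_vec y : 'cV[R]_m := W^T *m diag_mx y *m u^T.

Lemma gainE y : gain W u y = sqnorm (gain_vec y).
Proof. by []. Qed.

Lemma gain_vecDZ y z t : gain_vec (y + t *: z) = gain_vec y + t *: gain_vec z.
Proof. by rewrite /gain_vec linearD linearZ /= mulmxDr mulmxDl -scalemxAr -scalemxAl. Qed.

Lemma sectorQ_quadE p q :
  ((pair2 p q)^T *m sectorQ a b *m pair2 p q) 0 0 = - 2 * ((q - a * p) * (q - b * p)).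
Proof. by rewrite !mxE !big_ord_recl !big_ord0 !mxE /= !big_ord_recl !big_ord0 !mxE /=; ring. Qed.

Lemma admissibleP dx ds : admissible W a b dx ds <->
  dx != 0 /\ exists2 y, in_box a b y & ds = diag_mx y *m (W *m dx).
Proof.
have sector i : (0 <= ((pair2 ((W *m dx) i 0) (ds i 0))^T *m sectorQ a b
                        *m pair2 ((W *m dx) i 0) (ds i 0)) 0 0)
    <-> exists2 t, a <= t <= b & ds i 0 = t * (W *m dx) i 0.
  by rewrite sectorQ_quadE nmulr_rge0 ?oppr_lt0 ?ltr0n //; exact: sector_slopeP.
split=> [[dx0 hdx] | [dx0 [y hy ds_y]]].
  have /fin_all_exists2[f hf hds] : forall i, exists2 t, a <= t <= b & ds i 0 = t * (W *m dx) i 0.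
    by move=> i; apply/sector/hdx.
  split=> //; exists (\row_i f i); first by move=> i; rewrite mxE.
  by apply/colP => i; rewrite mul_diag_mx mxE [(\row_i f i) 0 i]mxE hds.
split=> // i; apply/sector; exists (y 0 i) => //.
by rewrite ds_y mul_diag_mx mxE.
Qed.

Lemma mulmx_diag_gain_vec y dx :
  (u *m (diag_mx y *m (W *m dx))) 0 0 = ((gain_vec y)^T *m dx) 0 0.
Proof. by rewrite /gain_vec !trmx_mul !trmxK tr_diag_mx !mulmxA. Qed.

Lemma ratio_set_le_gain r : ratio_set W u a b r -> exists2 y, in_box a b y & r <= gain W u y.
Proof.
move=> [dx [ds [/admissibleP [dx0 [y hy ->]] ->]]]; exists y => //.
rewrite mulmx_diag_gain_vec -/(sqnorm dx) ler_pdivrMr ?sqnorm_gt0 // gainE.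
exact: cauchy_schwarz.
Qed.

Lemma exists_ratio_ge_gain y : (0 < m)%N -> in_box a b y ->
  exists2 r, ratio_set W u a b r & gain W u y <= r.
Proof.
move=> m_gt0 hy.
pose ratio dx := ((u *m (diag_mx y *m (W *m dx))) 0 0) ^+ 2 / sqnorm dx.
have ratio_in dx : dx != 0 -> ratio_set W u a b (ratio dx).
  move=> dx0; exists dx, (diag_mx y *m (W *m dx)); split=> //.
  by apply/admissibleP; split=> //; exists y.
have [v0 | v_neq0] := eqVneq (gain_vec y) 0; last first.
  exists (ratio (gain_vec y)); first exact: ratio_in.
  by rewrite /ratio mulmx_diag_gain_vec -/(sqnorm _) -gainE expr2 mulfK // gt_eqF ?sqnorm_gt0.
have one_neq0 : const_mx 1 != 0 :> 'cV[R]_m.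
  by apply/eqP => /colP /(_ (Ordinal m_gt0)); rewrite !mxE; apply/eqP; rewrite oner_eq0.
exists (ratio (const_mx 1)); first exact: ratio_in.
by rewrite gainE v0 [sqnorm 0]/sqnorm mulmx0 mxE divr_ge0 ?sqr_ge0 ?sqnorm_ge0.
Qed.

Definition row_upd y (k : 'I_n) t : 'rV[R]_n := \row_i (if i == k then t else y 0 i).

Lemma row_updE y k t : row_upd y k t = row_upd y k 0 + t *: delta_mx 0 k.
Proof.
apply/rowP => i; rewrite !mxE eqxx /=.
by case: eqP => _; rewrite ?mulr1 ?mulr0 ?add0r ?addr0.
Qed.

Lemma row_upd_id y k : row_upd y k (y 0 k) = y.
Proof. by apply/rowP => i; rewrite mxE; case: eqP => // ->. Qed.

Lemma in_box_row_upd y k t : in_box a b y -> a <= t <= b -> in_box a b (row_upd y k t).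
Proof. by move=> hy ht i; rewrite mxE; case: eqP. Qed.

Lemma gain_row_upd_le y k t : a <= t <= b ->
  gain W u (row_upd y k t) <= Num.max (gain W u (row_upd y k a)) (gain W u (row_upd y k b)).
Proof.
rewrite !gainE (row_updE y k t) (row_updE y k a) (row_updE y k b) !gain_vecDZ.
exact: sqnorm_affine_le_max.
Qed.

Definition vertex (f : {ffun 'I_n -> bool}) : 'rV[R]_n := \row_i (if f i then b else a).

Lemma gain_le_vertex_from k y : in_box a b y ->
    (forall i : 'I_n, (k <= i)%N -> y 0 i = a \/ y 0 i = b) ->
  exists f, gain W u y <= gain W u (vertex f).
Proof.
elim: k y => [|k IH] y hy y_vert.
  exists [ffun i => y 0 i == b].
  rewrite [X in gain W u X <= _](_ : y = vertex [ffun i => y 0 i == b]) //.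
  apply/rowP => i; rewrite !mxE ffunE.
  by case: eqP => [-> | ne] //; case: (y_vert i (leq0n i)).
have [k_lt_n | n_le_k] := ltnP k n; last first.
  apply: IH => // i k_le_i; apply: y_vert.
  by have := leq_ltn_trans (leq_trans n_le_k k_le_i) (ltn_ord i); rewrite ltnn.
pose k' := Ordinal k_lt_n.
have upd_vert t : t = a \/ t = b ->
    forall i : 'I_n, (k <= i)%N -> (row_upd y k' t) 0 i = a \/ (row_upd y k' t) 0 i = b.
  move=> ht i k_le_i; rewrite mxE; case: eqP => // ne; apply: y_vert.
  by rewrite ltn_neqAle k_le_i andbT; apply/eqP => e; apply: ne; apply: val_inj.
have a_in : a <= a <= b by rewrite lexx hab.
have b_in : a <= b <= b by rewrite lexx hab.
have := gain_row_upd_le y k' (hy k'); rewrite row_upd_id le_max => /orP[le_a | le_b].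
  have [f le_f] := IH _ (in_box_row_upd k' hy a_in) (upd_vert a (or_introl erefl)).
  by exists f; apply: le_trans le_a le_f.
have [f le_f] := IH _ (in_box_row_upd k' hy b_in) (upd_vert b (or_intror erefl)).
by exists f; apply: le_trans le_b le_f.
Qed.

Lemma gain_box_max :
  exists2 y0, in_box a b y0 & forall y, in_box a b y -> gain W u y <= gain W u y0.
Proof.
have [f0 _ f0_max] :=
  @arg_maxP _ R _ [ffun=> false] xpredT (fun f => gain W u (vertex f)) isT.
exists (vertex f0) => [i | y hy]; first by rewrite mxE; case: (f0 i); rewrite lexx hab.
have [f le_f] : exists f, gain W u y <= gain W u (vertex f).
  by apply: (gain_le_vertex_from (k := n)) => // i; rewrite leqNgt ltn_ord.
exact: le_trans le_f (f0_max f isT).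
Qed.
End SectorBoundedGain.

Theorem mainTheorem7 (R : realType) (n m : nat) (hm : (0 < m)%N)
    (W : 'M[R]_(n, m)) (u : 'rV[R]_n) (a b : R) (hab : a <= b) :
  exists y0 : 'rV[R]_n,
    [/\ in_box a b y0,
        (forall y, in_box a b y -> gain W u y <= gain W u y0),
        ubound (ratio_set W u a b) (gain W u y0)
      & (forall M, ubound (ratio_set W u a b) M -> gain W u y0 <= M)].
Proof.
have [y0 box0 y0_max] := gain_box_max W u hab.
exists y0; split=> // [r /(ratio_set_le_gain hab) [y hy r_le] | M M_ub].
  exact: le_trans r_le (y0_max y hy).
have [r hr le_r] := exists_ratio_ge_gain W u hab hm box0.
exact: le_trans le_r (M_ub r hr).
Qed.
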